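(* Let $n\in\mathbb{N}$ and let $A$ be an $n\times n$ acyclic real symmetric matrix. Suppose $\lambda$ is an eigenvalue of $A$ of multiplicity one and $u\in[n]$ is an index with $\phi(A-u,\lambda)\neq 0$. Define $\boldsymbol{\alpha}\in\mathbb{R}^n$ by \[ \boldsymbol{\alpha}(v)=\begin{cases} W(P_{u,v})\,\phi(A-P_{u,v},\lambda) & \text{if there is a path from } u \text{ to } v \text{ in } G(A),\\ 0 & \text{otherwise}.\end{cases} \] Then $\boldsymbol{\alpha}$ is a $\lambda$-eigenvector of $A$.
   Context: $[n]=\{1,\ldots,n\}$. For a real symmetric $n\times n$ matrix $A$, its graph $G(A)$ has vertex set $[n]$, with $u\neq v$ adjacent iff $A_{uv}\neq 0$; each edge $uv$ has weight $w(uv)=A_{uv}$ and each vertex $v$ has weight $w(v)=A_{vv}$. $A$ is called acyclic if $G(A)$ is a forest (i.e. $A$ is the adjacency matrix of a weighted forest with nonzero real edge weights and possibly vertex weights). When $u,v$ lie in the same component of the forest, $P_{u,v}$ denotes the unique path between them (a single vertex if $u=v$), and $W(P_{u,v})$ is the product of the weights of the edges of $P_{u,v}$ (equal to $1$ if $u=v$). For an index set (or vertex set of a subgraph) $U$, $A-U$ is the matrix obtained from $A$ by deleting rows and columns indexed by $U$. $\phi(B,\lambda)=\det(\lambda \mathbb{I}-B)$ is the characteristic polynomial evaluated at $\lambda$, with $\phi$ of the empty matrix equal to $1$. *)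

From HB Require Import structures.
From mathcomp Require Import all_boot all_order all_algebra.
From mathcomp Require Import all_reals.
From Stdlib Require Import ClassicalEpsilon.
Set Implicit Arguments. Unset Strict Implicit. Unset Printing Implicit Defensive.
Import Order.TTheory GRing.Theory Num.Theory.
Local Open Scope ring_scope.

Section GraphOfMatrix.
Variables (R : realType) (n : nat).
Implicit Types (A : 'M[R]_n) (u v : 'I_n) (s : seq 'I_n) (U : {set 'I_n}).

Definition madj A : rel 'I_n := fun u v => (u != v) && (A u v != 0).

Definition acyclic_mx A : Prop :=
  forall s, uniq s -> (3 <= size s)%N -> ~~ cycle (madj A) s.

Definition is_uvpath A u v s : bool :=
  [&& s != [::], head u s == u, last u s == v, uniq s &
      path (madj A) u (behead s)].

(* the path P_{u,v}, if one exists (unique in a forest) *)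
Definition Puv A u v : option (seq 'I_n) :=
  match excluded_middle_informative (exists s, is_uvpath A u v s) with
  | left h => Some (xchoose h)
  | right _ => None
  end.

Definition Wpath A s : R := \prod_(e <- zip s (behead s)) A e.1 e.2.

Definition mx_del A U : 'M[R]_#|~: U| :=
  \matrix_(i, j) A (enum_val i) (enum_val j).

Definition phi m (B : 'M[R]_m) (l : R) : R := (char_poly B).[l].

Definition alpha A u l : 'cV[R]_n :=
  \col_v match Puv A u v with
         | Some s => Wpath A s * phi (mx_del A [set x | x \in s]) l
         | None => 0
         end.
End GraphOfMatrix.

(* Let M := l%:M - A and let principal_mx M S agree with M on S x S and with
   the identity elsewhere, so that phi (A - U) l = \det (principal_mx M (~: U)).
   Since the support graph of M is a forest, only permutations made of fixed
   points and transpositions of adjacent vertices contribute to these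
   determinants, which yields, for v in S, the expansion
     det M_S = M_vv det M_(S-v) - sum_w M_vw M_wv det M_(S-v-w).
   Row v of M alpha vanishes: if v is not connected to u every term is zero;
   otherwise let s be the path from u to the predecessor p of v.  By the
   expansion at v, the neighbours of v off s contribute W(P_uv) det M_(~s),
   which the term of p cancels; for v = u there is no p, but det M = 0 since
   l is an eigenvalue.  Finally alpha u = phi (A - u) l is nonzero. *)

From HB Require Import structures.
From mathcomp Require Import all_boot all_order all_algebra.
From mathcomp Require Import all_reals.
From mathcomp Require Import fingroup perm ring.
From Stdlib Require Import ClassicalEpsilon.
Import Order.TTheory GRing.Theory Num.Theory.
Set Implicit Arguments. Unset Strict Implicit. Unset Printing Implicit Defensive.
Local Open Scope ring_scope.

Section PrincipalMatrix.
Variables (R : comPzRingType) (n : nat).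
Implicit Types (M X : 'M[R]_n) (S : {set 'I_n}).

Definition principal_mx M S : 'M[R]_n :=
  \matrix_(i, j) if (i \in S) && (j \in S) then M i j else (i == j)%:R.

Definition supp_rel M : rel 'I_n := fun i j => (i != j) && (M i j != 0).

Definition supp_acyclic M : Prop :=
  forall c, uniq c -> (3 <= size c)%N -> ~~ path.cycle (supp_rel M) c.

Lemma principal_mxE M S i j :
  principal_mx M S i j = if (i \in S) && (j \in S) then M i j else (i == j)%:R.
Proof. by rewrite mxE. Qed.

Lemma principal_mx_in M S i j : i \in S -> j \in S -> principal_mx M S i j = M i j.
Proof. by move=> iS jS; rewrite principal_mxE iS jS. Qed.

Lemma principal_mx_out M S i j :
  i != j -> (i \notin S) || (j \notin S) -> principal_mx M S i j = 0.
Proof.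
by rewrite -negb_and principal_mxE => ij /negPf ->; rewrite (negPf ij).
Qed.

Lemma principal_mx_diag_out M S i : i \notin S -> principal_mx M S i i = 1.
Proof. by move=> iS; rewrite principal_mxE (negPf iS) eqxx. Qed.

Lemma prodD2 (F : 'I_n -> R) v w : v != w ->
  \prod_i F i = F v * F w * \prod_(i | (i != v) && (i != w)) F i.
Proof.
move=> vw; rewrite (bigD1 v) //= (bigD1 w) 1?eq_sym //= mulrA.
by congr (_ * _); apply: eq_bigl => i; rewrite andbC.
Qed.

Lemma prod_principal_mx_move_out M S (s : 'S_n) i :
  i \notin S -> s i != i -> \prod_j principal_mx M S j (s j) = 0.
Proof.
move=> iS si; rewrite (bigD1 i) //= principal_mx_out ?mul0r ?iS //.
by rewrite eq_sym.
Qed.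

(* The s-orbit of v would be a cycle of length at least 3 in the support graph. *)
Lemma prod_principal_mx_long_cycle M S (s : 'S_n) v w : supp_acyclic M ->
  w != v -> s v = w -> s w != v -> \prod_i principal_mx M S i (s i) = 0.
Proof.
move=> acyc wv svw swv; apply/eqP; apply: contraT => prod_nz.
have nz i : principal_mx M S i (s i) != 0.
  by apply: contra prod_nz => /eqP z; rewrite (bigD1 i) //= z mul0r.
have edge i : s i != i -> supp_rel M i (s i).
  move=> si; have si' : (i == s i) = false by rewrite eq_sym (negPf si).
  have := nz i; rewrite /supp_rel principal_mxE si' /=.
  by case: ifP => // _; rewrite mulr0n eqxx.
have moved x : x \in orbit s v -> s x != x.
  rewrite -fconnect_orbit fconnect_sym; last exact: perm_inj.
  move=> /iter_findex hx; apply/negP => /eqP sx; move: hx; rewrite iter_fix //.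
  by move=> xv; subst x; move: wv; rewrite -svw sx eqxx.
have sw : s w != w.
  by apply: contra wv => /eqP sw; apply/eqP; apply: (@perm_inj _ s); rewrite sw svw.
have cyc : path.cycle (supp_rel M) (orbit s v).
  apply: (sub_in_cycle (P := mem (orbit s v)) (e := frel s)).
  - by move=> x y xo _ /= /eqP <-; apply: edge (moved x xo).
  - by apply/allP.
  - exact: (cycle_orbit perm_inj).
have sub : {subset [:: v; w; s w] <= orbit s v}.
  move=> x; rewrite !inE -!fconnect_orbit => /or3P[] /eqP ->.
  - exact: connect0.
  - by rewrite -svw fconnect1.
  - by rewrite -svw; apply: (connect_trans (fconnect1 s v)); apply: fconnect1.
have uniq3 : uniq [:: v; w; s w].
  by rewrite /= !inE negb_or eq_sym wv eq_sym swv eq_sym sw.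
by have := acyc _ (orbit_uniq s v) (uniq_leq_size uniq3 sub); rewrite cyc.
Qed.

Lemma det_principal_mx_fixed M S v : v \in S ->
  \sum_(s : 'S_n | s v == v) (-1) ^+ s * \prod_i principal_mx M S i (s i)
  = M v v * \det (principal_mx M (S :\ v)).
Proof.
move=> vS; rewrite /determinant big_distrr /=.
rewrite [RHS](bigID (fun s : 'S_n => s v == v)) /= [X in _ = _ + X]big1 ?addr0.
  apply: eq_bigr => s /eqP svv; rewrite mulrCA; congr (_ * _).
  rewrite (bigD1 v) //= [in RHS](bigD1 v) //= svv principal_mx_in //.
  rewrite principal_mx_diag_out ?setD11 // mul1r.
  congr (_ * _); apply: eq_bigr => i iv.
  have siv : s i != v by rewrite -svv (inj_eq perm_inj).
  by rewrite !principal_mxE !in_setD1 iv siv.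
by move=> s svv; rewrite (@prod_principal_mx_move_out _ _ _ v) ?mulr0 ?setD11.
Qed.

(* Reindexing by [tperm v w] turns the permutations swapping [v] and [w]
   into those fixing both. *)
Lemma det_principal_mx_swap M S v w : supp_acyclic M -> w != v ->
  \sum_(s : 'S_n | s v == w) (-1) ^+ s * \prod_i principal_mx M S i (s i)
  = - (principal_mx M S v w * principal_mx M S w v
       * \det (principal_mx M (S :\ v :\ w))).
Proof.
move=> acyc wv; have vw : v != w by rewrite eq_sym.
rewrite (bigID (fun s : 'S_n => s w == v)) /= [X in _ + X]big1 ?addr0; last first.
  move=> s /andP[/eqP svw swv].
  by rewrite (prod_principal_mx_long_cycle _ acyc wv svw swv) mulr0.
rewrite (reindex_inj (mulgI (tperm v w))) /= /determinant big_distrr /= -sumrN.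
rewrite [RHS](bigID (fun s : 'S_n => (s v == v) && (s w == w))) /=.
rewrite [X in _ = _ + X]big1 ?addr0; last first.
  move=> s; rewrite negb_and => /orP[] moved.
  - by rewrite (@prod_principal_mx_move_out _ _ _ v) ?mulr0 ?oppr0 // !inE eqxx ?andbF.
  - by rewrite (@prod_principal_mx_move_out _ _ _ w) ?mulr0 ?oppr0 // !inE eqxx.
apply: eq_big => [s|s]; first by rewrite !permM tpermL tpermR andbC.
rewrite !permM tpermL tpermR => /andP[/eqP sww /eqP svv].
rewrite odd_permM signr_addb odd_tperm vw expr1 mulN1r mulNr -mulrN.
rewrite (prodD2 _ vw) [in RHS](prodD2 _ vw) !permM tpermL tpermR svv sww.
rewrite !principal_mx_diag_out ?inE ?eqxx ?andbF // !mul1r.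
have -> : \prod_(i | (i != v) && (i != w)) principal_mx M S i ((tperm v w * s)%g i) =
          \prod_(i | (i != v) && (i != w)) principal_mx M (S :\ v :\ w) i (s i).
  apply: eq_bigr => i /andP[iv iw]; rewrite permM tpermD 1?eq_sym //.
  have siv : s i != v by rewrite -svv (inj_eq perm_inj).
  have siw : s i != w by rewrite -sww (inj_eq perm_inj).
  by rewrite !principal_mxE !inE iv iw siv siw.
by rewrite mulrN mulrCA.
Qed.

Lemma det_principal_mx_expand M S v : supp_acyclic M -> v \in S ->
  \det (principal_mx M S) = M v v * \det (principal_mx M (S :\ v))
    - \sum_(w | w != v) principal_mx M S v w * principal_mx M S w v
                        * \det (principal_mx M (S :\ v :\ w)).
Proof.
move=> acyc vS; rewrite {1}/determinant.
rewrite (partition_big (fun s : 'S_n => s v) predT) //= (bigD1 v) //= -sumrN.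
rewrite det_principal_mx_fixed //; congr (_ + _).
by apply: eq_bigr => w wv; rewrite det_principal_mx_swap.
Qed.

Lemma det_reindex_inj p X (f : 'I_p -> 'I_n) : injective f -> p = n ->
  \det (\matrix_(i, j) X (f i) (f j)) = \det X.
Proof.
move=> finj pn; subst p.
have -> : \matrix_(i, j) X (f i) (f j) = row_perm (perm finj) (col_perm (perm finj) X).
  by apply/matrixP => i j; rewrite !mxE !permE.
rewrite row_permE col_permE !det_mulmx !det_perm odd_permV.
by rewrite mulrCA -signr_addb addbb expr0 mulr1.
Qed.

(* Listing S before ~: S makes principal_mx X S block diagonal, with an
   identity block. *)
Lemma det_principal_mx X S :
  \det (principal_mx X S) =
  \det (\matrix_(i, j) X (@enum_val _ (mem S) i) (@enum_val _ (mem S) j)).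
Proof.
pose f (i : 'I_(#|S| + #|~: S|)) : 'I_n :=
  match split i with
  | inl a => @enum_val _ (mem S) a
  | inr b => @enum_val _ (mem (~: S)) b
  end.
have card_split : (#|S| + #|~: S| = n)%N by rewrite cardsC card_ord.
have finj : injective f.
  move=> i j; rewrite -[i]splitK -[j]splitK /f.
  case: (split i) => a; case: (split j) => b; rewrite !unsplitK /=.
  - by move/enum_val_inj => ->.
  - move=> h; have := enum_valP a; have := enum_valP b; rewrite -h inE.
    by move=> /negP.
  - move=> h; have := enum_valP a; have := enum_valP b; rewrite -h inE.
    by move=> + /negP.
  - by move/enum_val_inj => ->.
rewrite -(det_reindex_inj (principal_mx X S) finj card_split).
have -> : \matrix_(i, j) principal_mx X S (f i) (f j) =
   block_mx (\matrix_(i, j) X (@enum_val _ (mem S) i) (@enum_val _ (mem S) j))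
            0 0 1%:M.
  apply/matrixP => i j; rewrite /f !mxE.
  case: (split i) => a; rewrite mxE; case: (split j) => b; rewrite ?mxE.
  - by rewrite !enum_valP.
  - have := enum_valP b; rewrite inE => /negPf nb.
    rewrite nb andbF; case: eqP => // h.
    by move: (enum_valP a); rewrite h nb.
  - have := enum_valP a; rewrite inE => /negPf na.
    rewrite na /=; case: eqP => // h.
    by move: (enum_valP b); rewrite -h na.
  - have := enum_valP a; rewrite inE => /negPf na.
    by rewrite na /= (inj_eq enum_val_inj).
by rewrite det_ublock det1 mulr1.
Qed.

End PrincipalMatrix.

Lemma horner_char_poly (R : comNzRingType) m (B : 'M[R]_m) l :
  (char_poly B).[l] = \det (l%:M - B).
Proof.
rewrite /char_poly -horner_evalE -det_map_mx; congr (\det _).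
apply/matrixP => i j; rewrite !mxE /= horner_evalE.
by rewrite hornerD hornerN hornerMn hornerX hornerC.
Qed.

Lemma phi_mx_del (R : realType) n (A : 'M[R]_n) U l :
  phi (mx_del A U) l = \det (principal_mx (l%:M - A) (~: U)).
Proof.
rewrite /phi horner_char_poly det_principal_mx; congr (\det _).
by apply/matrixP => i j; rewrite !mxE (inj_eq enum_val_inj).
Qed.

Section ForestPaths.
Variables (R : realType) (n : nat) (A : 'M[R]_n).
Hypotheses (Asym : A^T = A) (Aacyc : acyclic_mx A).
Implicit Types (u v w : 'I_n) (s t : seq 'I_n).
Local Notation e := (madj A).

Lemma madjC v w : e v w = e w v.
Proof. by rewrite /madj eq_sym -{1}Asym mxE. Qed.

Lemma rev_path_madj v t : path e v t -> path e (last v t) (rev (belast v t)).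
Proof. by move=> h; rewrite rev_path; apply: sub_path h => a b /=; rewrite madjC. Qed.

(* Two simple paths from [u] to the same vertex with different first steps
   would close a cycle through [u] and their first common vertex. *)
Lemma forest_path_head u t1 t2 : path e u t1 -> path e u t2 ->
  uniq (u :: t1) -> uniq (u :: t2) -> t1 != [::] -> t2 != [::] ->
  last u t1 = last u t2 -> head u t1 = head u t2.
Proof.
move=> p1 p2 u1 u2 n1 n2 hl; apply/eqP; apply: contraT => hd.
have meet : has (mem t1) t2.
  apply/hasP; exists (last u t2).
    by case: t2 {p2 u2 hl hd} n2 => // x r _; rewrite /= mem_last.
  by rewrite -hl; case: t1 {p1 u1 hl hd} n1 => // x r _; rewrite /= mem_last.
move: p1 p2 u1 u2 n1 n2 hl hd.
case/split_find: meet => z a b /splitPr[c d] ha p1 p2 u1 u2 n1 n2 hl hd.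
have cyc := @Aacyc (u :: c ++ z :: rev a); exfalso; apply: (negP (cyc _ _)).
- move: u1 u2; rewrite cat_rcons !cons_uniq !cat_uniq !mem_cat !inE /= rev_uniq mem_rev.
  move=> /andP[/norP[uc /norP[uz ud]] /and3P[uc' hc /andP[zd ud']]].
  move=> /andP[/norP[ua _] /and3P[ua' _ _]].
  rewrite (negPf uc) (negPf uz) (negPf ua) uc' ua' mem_rev has_rev /=.
  move: hc => /norP[/negPf-> _] /=.
  apply/andP; split.
    apply/hasPn => x xa; apply/negP => xc; move/hasP: ha; apply; exists x => //.
    by change (x \in c ++ z :: d); rewrite mem_cat xc.
  rewrite andbT; apply/negP => za; move/hasP: ha; apply; exists z => //.
  by change (z \in c ++ z :: d); rewrite mem_cat inE eqxx orbT.
- rewrite /= size_cat /= size_rev.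
  clear -hd; case: c hd => [|x c] /=; last by rewrite addnS.
  by case: a => [|y a] //=; rewrite eqxx.
- rewrite /= rcons_cat cat_path.
  move: p1; rewrite cat_path /= => /and3P[-> -> _] /=.
  move: p2; rewrite cat_rcons cat_path /= => /and3P[pa eaz _].
  have h : path e u (rcons a z) by rewrite rcons_path pa eaz.
  by have := rev_path_madj h; rewrite last_rcons belast_rcons rev_cons.
Qed.

Lemma forest_path_unique u t1 t2 : path e u t1 -> path e u t2 ->
  uniq (u :: t1) -> uniq (u :: t2) -> last u t1 = last u t2 -> t1 = t2.
Proof.
elim: t1 u t2 => [|x1 r1 IH] u [|x2 r2] //.
- by move=> _ _ _ /= /andP[+ _] hl; rewrite hl mem_last.
- by move=> _ _ /= /andP[+ _] _ hl; rewrite -hl mem_last.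
move=> p1 p2 u1 u2 hl.
have /= x12 := forest_path_head p1 p2 u1 u2 isT isT hl; subst x2.
case/andP: p1 => _ p1; case/andP: p2 => _ p2.
case/andP: u1 => _ u1; case/andP: u2 => _ u2.
by rewrite (IH x1 r2).
Qed.

Lemma uvpath_cons u v t :
  is_uvpath A u v (u :: t) = [&& last u t == v, uniq (u :: t) & path e u t].
Proof. by rewrite /is_uvpath /= eqxx. Qed.

Lemma uvpath_head u v s : is_uvpath A u v s -> exists t, s = u :: t.
Proof. by case: s => // x t /and4P[_ /eqP <- _ _]; exists t. Qed.

Lemma uvpath_unique u v s1 s2 :
  is_uvpath A u v s1 -> is_uvpath A u v s2 -> s1 = s2.
Proof.
move=> h1 h2; have [t1 E1] := uvpath_head h1; have [t2 E2] := uvpath_head h2.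
subst; move: h1 h2; rewrite !uvpath_cons => /and3P[/eqP l1 u1 p1] /and3P[/eqP l2 u2 p2].
by rewrite (forest_path_unique p1 p2 u1 u2) // l1 l2.
Qed.

Lemma Puv_uvpath u v s : is_uvpath A u v s -> Puv A u v = Some s.
Proof.
move=> h; rewrite /Puv; case: excluded_middle_informative => [ex|[]].
  by rewrite (uvpath_unique (xchooseP ex) h).
by exists s.
Qed.

Lemma uvpath_Puv u v s : Puv A u v = Some s -> is_uvpath A u v s.
Proof.
by rewrite /Puv; case: excluded_middle_informative => // ex [<-]; apply: xchooseP.
Qed.

Lemma uvpath_refl u : is_uvpath A u u [:: u].
Proof. by rewrite uvpath_cons eqxx. Qed.

Lemma uvpath_notin u v s : is_uvpath A u v (rcons s v) -> v \notin s.
Proof. by case/and5P => _ _ _; rewrite rcons_uniq => /andP[]. Qed.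

Lemma uvpath_rcons u v s w :
  is_uvpath A u v s -> w \notin s -> e v w -> is_uvpath A u w (rcons s w).
Proof.
move=> h; have [t E] := uvpath_head h; subst s; move: h.
rewrite rcons_cons !uvpath_cons => /and3P[/eqP lv ut pt] wt evw.
by rewrite last_rcons eqxx -rcons_cons rcons_uniq wt ut rcons_path pt lv evw.
Qed.

Lemma uvpath_prefix u v s w : is_uvpath A u v s -> w \in s ->
  exists s1 s2, s = s1 ++ s2 /\ is_uvpath A u w s1.
Proof.
move=> h ws; have [t E] := uvpath_head h; subst s; move: ws h.
rewrite inE => /orP[/eqP -> _|/splitPr[t1 t2] h].
  by exists [:: u], t; split => //; apply: uvpath_refl.
exists (u :: rcons t1 w), t2; split; first by rewrite /= cat_rcons.
move: h; rewrite !uvpath_cons last_rcons eqxx -cat_rcons -cat_cons cat_uniq cat_path.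
by case/and3P => _ /and3P[-> _ _] /andP[-> _].
Qed.

Lemma uvpath_belast u v t :
  is_uvpath A u v (rcons (u :: t) v) -> is_uvpath A u (last u t) (u :: t).
Proof.
rewrite rcons_cons !uvpath_cons last_rcons !eqxx -rcons_cons rcons_uniq rcons_path.
by case/and3P => _ /andP[_ ->] /andP[-> _].
Qed.

Lemma uvpath_nonadj u v t w : is_uvpath A u v (rcons (u :: t) v) ->
  w \in u :: t -> w != last u t -> A v w = 0.
Proof.
move=> hv wt wl; apply/eqP; apply: contraT => avw.
have [s1 [s2 [E hw]]] := uvpath_prefix (uvpath_belast hv) wt.
have vs1 : v \notin s1.
  by apply: contra (uvpath_notin hv); rewrite E mem_cat => ->.
have ewv : e w v.
  by rewrite madjC /madj avw andbT; apply: contraNneq (uvpath_notin hv) => ->.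
have E1 : u :: t = s1.
  by apply: (@rcons_injl _ v); apply: uvpath_unique hv (uvpath_rcons hw vs1 ewv).
by move: hw; rewrite -E1 uvpath_cons eq_sym (negPf wl).
Qed.

Lemma Puv_None_madj u v w : Puv A u v = None -> e v w -> Puv A u w = None.
Proof.
move=> hv evw; case E: (Puv A u w) => [s|] //.
have hw := uvpath_Puv E; move: hv.
have [vs|vs] := boolP (v \in s).
  by have [s1 [_ [_ /Puv_uvpath ->]]] := uvpath_prefix hw vs.
by rewrite madjC in evw; rewrite (Puv_uvpath (uvpath_rcons hw vs evw)).
Qed.

End ForestPaths.

Lemma setC_mem_rcons (T : finType) (s : seq T) w :
  ~: [set x | x \in rcons s w] = (~: [set x | x \in s]) :\ w.
Proof. by apply/setP => x; rewrite !inE mem_rcons inE negb_or. Qed.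

Section Eigenvector.
Variables (R : realType) (n : nat) (A : 'M[R]_n) (l : R) (u : 'I_n).
Hypotheses (Asym : A^T = A) (Aacyc : acyclic_mx A).
Local Notation M := (l%:M - A).
Local Notation N S := (principal_mx M S).
Local Notation compl s := (~: [set x | x \in s]).

Lemma A_sym i j : A j i = A i j.
Proof. by rewrite -{1}Asym mxE. Qed.

Lemma Wpath1 x : Wpath A [:: x] = 1.
Proof. by rewrite /Wpath big_nil. Qed.

Lemma Wpath_cons2 x y t : Wpath A [:: x, y & t] = A x y * Wpath A (y :: t).
Proof. by rewrite /Wpath big_cons. Qed.

Lemma Wpath_rcons2 s v w : Wpath A (rcons (rcons s v) w) = Wpath A (rcons s v) * A v w.
Proof.
elim: s => [|x s IH]; first by rewrite /= Wpath_cons2 !Wpath1 mulr1 mul1r.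
by case: s IH => [|y s] IH; rewrite /= Wpath_cons2 [in RHS]Wpath_cons2 IH mulrA.
Qed.

Lemma char_mx_offdiag i j : i != j -> M i j = - A i j.
Proof. by move=> ij; rewrite !mxE (negPf ij) mulr0n sub0r. Qed.

Lemma supp_acyclic_char_mx : supp_acyclic M.
Proof.
move=> c uc sc; rewrite (@eq_cycle _ _ (madj A)); first exact: Aacyc.
move=> i j; rewrite /supp_rel /madj; case: (eqVneq i j) => //= ij.
by rewrite char_mx_offdiag // oppr_eq0.
Qed.

Lemma det_principal_mx_eigen : eigenvalue A l -> \det (N setT) = 0.
Proof.
move=> eig; have -> : N setT = M by apply/matrixP => i j; rewrite mxE !in_setT.
by rewrite -horner_char_poly; apply/rootP; rewrite -eigenvalue_root_char.
Qed.

Lemma alpha_uvpath v s : is_uvpath A u v s ->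
  alpha A u l v 0 = Wpath A s * \det (N (compl s)).
Proof. by move=> h; rewrite mxE (Puv_uvpath Asym Aacyc h) phi_mx_del. Qed.

Lemma alpha_None v : Puv A u v = None -> alpha A u l v 0 = 0.
Proof. by move=> h; rewrite mxE h. Qed.

Lemma alpha_root : alpha A u l u 0 = phi (mx_del A [set u]) l.
Proof.
rewrite mxE (Puv_uvpath Asym Aacyc (uvpath_refl A u)) Wpath1 mul1r.
by have -> : [set x | x \in [:: u]] = [set u] by apply/setP => x; rewrite !inE.
Qed.

Lemma alpha_term v s w : is_uvpath A u v (rcons s v) -> w \notin rcons s v ->
  M v w * alpha A u l w 0 =
  - (Wpath A (rcons s v)
     * (N (compl s) v w * N (compl s) w v * \det (N (compl s :\ v :\ w)))).
Proof.
move=> hv wsv; move: (wsv); rewrite mem_rcons inE negb_or => /andP[wv ws].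
have vw : v != w by rewrite eq_sym.
have vS : v \in compl s by rewrite !inE (uvpath_notin hv).
have wS : w \in compl s by rewrite !inE.
rewrite !principal_mx_in // !char_mx_offdiag // (A_sym v w).
have [->|avw] := eqVneq (A v w) 0; first by rewrite !(oppr0, mul0r, mulr0).
have evw : madj A v w by rewrite /madj vw avw.
rewrite (alpha_uvpath (uvpath_rcons hv wsv evw)) Wpath_rcons2 !setC_mem_rcons.
ring.
Qed.

Lemma alpha_row_off_path v s : is_uvpath A u v (rcons s v) ->
  \sum_(w | w \notin s) M v w * alpha A u l w 0
  = Wpath A (rcons s v) * \det (N (compl s)).
Proof.
move=> hv; have vS : v \in compl s by rewrite !inE (uvpath_notin hv).
have off_path : \sum_(w | (w \notin s) && (w != v)) M v w * alpha A u l w 0 =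
    - (Wpath A (rcons s v) * \sum_(w | w != v)
         N (compl s) v w * N (compl s) w v * \det (N (compl s :\ v :\ w))).
  rewrite mulr_sumr -sumrN [RHS](bigID (fun w => w \in s)) /=.
  rewrite [X in _ = X + _]big1 ?add0r => [|w /andP[wv ws]]; last first.
    have wS : w \notin compl s by rewrite !inE negbK.
    by rewrite principal_mx_out ?wS ?orbT ?mul0r ?mulr0 ?oppr0 // eq_sym.
  apply: eq_big => [w|w /andP[ws wv]]; first by rewrite andbC.
  by apply: alpha_term; rewrite // mem_rcons inE negb_or wv.
rewrite (bigD1 v) ?(uvpath_notin hv) //= off_path (alpha_uvpath hv).
rewrite setC_mem_rcons (det_principal_mx_expand supp_acyclic_char_mx vS).
ring.
Qed.

Lemma alpha_row_root : eigenvalue A l -> \sum_w M u w * alpha A u l w 0 = 0.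
Proof.
move=> eig; have := alpha_row_off_path (s := [::]) (uvpath_refl A u).
have -> : compl ([::] : seq 'I_n) = setT by apply/setP => x; rewrite !inE.
rewrite det_principal_mx_eigen // mulr0 => row_u; rewrite -[RHS]row_u.
by apply: eq_bigl => w; rewrite in_nil.
Qed.

(* The only neighbour of [v] on the path is its predecessor [last u t]; its
   term cancels the one produced by [alpha_row_off_path]. *)
Lemma alpha_row_reached v s : v != u -> Puv A u v = Some s ->
  \sum_w M v w * alpha A u l w 0 = 0.
Proof.
move=> vu /uvpath_Puv hs; have [t E] := uvpath_head hs; subst s.
case/lastP: t hs => [|t p] hs.
  by move: hs vu; rewrite uvpath_cons => /and3P[/eqP <-]; rewrite eqxx.
have pv : p = v by move: (hs); rewrite uvpath_cons last_rcons => /andP[/eqP].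
subst p; rewrite -rcons_cons in hs.
rewrite (bigID (fun w => w \in u :: t)) /= (alpha_row_off_path hs).
rewrite (bigD1 (last u t)) ?mem_last //= big1 ?addr0 => [|w /andP[wt wl]].
  have Wv : Wpath A (rcons (u :: t) v) = Wpath A (u :: t) * A (last u t) v.
    by rewrite (lastI u t) Wpath_rcons2.
  have vp : v != last u t by apply: contraNneq (uvpath_notin hs) => ->; apply: mem_last.
  rewrite (alpha_uvpath (uvpath_belast hs)) char_mx_offdiag // (A_sym (last u t)) Wv.
  ring.
have vw : v != w by apply: contraNneq (uvpath_notin hs) => ->.
by rewrite char_mx_offdiag // (uvpath_nonadj Asym Aacyc hs wt wl) oppr0 mul0r.
Qed.

Lemma alpha_row_unreached v : Puv A u v = None ->
  \sum_w M v w * alpha A u l w 0 = 0.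
Proof.
move=> hv; apply: big1 => w _.
have [->|wv] := eqVneq w v; first by rewrite alpha_None ?mulr0.
have [avw|avw] := eqVneq (A v w) 0.
  by rewrite char_mx_offdiag 1?eq_sym // avw oppr0 mul0r.
have evw : madj A v w by rewrite /madj eq_sym wv avw.
by rewrite alpha_None ?mulr0 // (Puv_None_madj Asym Aacyc hv evw).
Qed.

Lemma alpha_kernel : eigenvalue A l -> M *m alpha A u l = 0.
Proof.
move=> eig; apply/matrixP => v k; rewrite (ord1 k) mxE [RHS]mxE.
have [->|vu] := eqVneq v u; first exact: alpha_row_root.
case E: (Puv A u v) => [s|]; first exact: alpha_row_reached vu E.
exact: alpha_row_unreached.
Qed.

End Eigenvector.

Theorem theorem3p1 (R : realType) (n : nat) (A : 'M[R]_n) (l : R) (u : 'I_n) :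
  A^T = A ->
  acyclic_mx A ->
  eigenvalue A l ->
  mup l (char_poly A) = 1%N ->
  phi (mx_del A [set u]) l != 0 ->
  alpha A u l != 0 /\ A *m alpha A u l = l *: alpha A u l.
Proof.
move=> Asym Aacyc eig _ phi_u; split.
  by apply: contraNneq phi_u => alpha0; rewrite -(alpha_root l u Asym Aacyc) alpha0 mxE.
move/eqP: (alpha_kernel u Asym Aacyc eig).
by rewrite mulmxBl mul_scalar_mx subr_eq0 => /eqP ->.
Qed.
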